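(* Let $V_1$ and $V_2$ be real vector spaces of dimensions $d_1$ and $d_2$, let $U\subseteq V_1$ and $V\subseteq V_2$ be relatively compact open subsets, let $R_1,R_2>0$ and $0<\varepsilon\leq R_1^{d_1}R_2^{d_2}$, and define $$U\times_{R_1,R_2,\varepsilon}V:=\{(\alpha u,\beta v)\,;\,u\in U,\ v\in V,\ \alpha,\beta\in\mathbb{R},\ |\alpha|\leq R_1,\ |\beta|\leq R_2,\ |\alpha^{d_1}\beta^{d_2}|\leq\varepsilon\}.$$ If $U$ and $V$ are balanced, then $$U\times_{R_1,R_2,\varepsilon}V=\{(\alpha u,\beta v)\,;\,u\in U,\ v\in V,\ \alpha,\beta\in\mathbb{R},\ |\alpha|\leq R_1,\ |\beta|\leq R_2,\ |\alpha^{d_1}\beta^{d_2}|=\varepsilon\}.$$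
   Context: A subset $U$ of a real vector space is balanced if $\alpha U\subseteq U$ for all real $\alpha$ with $|\alpha|\leq 1$. *)

From HB Require Import structures.
From mathcomp Require Import all_boot all_order all_algebra.
From mathcomp Require Import all_classical all_reals all_analysis.
Set Implicit Arguments. Unset Strict Implicit. Unset Printing Implicit Defensive.
Import Order.TTheory GRing.Theory Num.Theory.
Import numFieldNormedType.Exports.
Local Open Scope classical_set_scope.
Local Open Scope ring_scope.

Definition balanced (R : realType) (n : nat) (U : set 'rV[R]_n) : Prop :=
  forall (a : R) (u : 'rV[R]_n), `|a| <= 1 -> U u -> U (a *: u).

Definition rel_compact (R : realType) (n : nat) (U : set 'rV[R]_n) : Prop :=
  compact (closure U).

Definition twisted_prod (R : realType) (d1 d2 : nat)
  (U : set 'rV[R]_d1) (V : set 'rV[R]_d2) (R1 R2 : R) (P : R -> Prop)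
  : set ('rV[R]_d1 * 'rV[R]_d2) :=
  [set p | exists (u : 'rV[R]_d1) (v : 'rV[R]_d2) (a b : R),
     [/\ U u, V v, `|a| <= R1, `|b| <= R2 &
         P `|a ^+ d1 * b ^+ d2| /\ p = (a *: u, b *: v)]].

From HB Require Import structures.
From mathcomp Require Import all_boot all_order all_algebra.
From mathcomp Require Import all_classical all_reals all_analysis.
Import Order.TTheory GRing.Theory Num.Theory.
Import numFieldNormedType.Exports.
Local Open Scope classical_set_scope.
Local Open Scope ring_scope.

(** Given (a u, b v) with |a^d1 b^d2| <= eps, move (|a|, |b|) along the segment
    towards (R1, R2). The monomial x^d1 y^d2 is continuous along it and ends at
    R1^d1 R2^d2 >= eps, so by the intermediate value theorem some (x, y) on the
    segment has x^d1 y^d2 = eps. Since |a| <= x and |b| <= y, balancedness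
    rewrites a u = x ((a/x) u) and b v = y ((b/y) v) with (a/x) u in U and
    (b/y) v in V. *)

Lemma segment_point_between (R : realDomainType) (s S c : R) :
  s <= S -> 0 <= c <= 1 -> s <= s + c * (S - s) <= S.
Proof.
move=> sS /andP[c_ge0 c_le1]; have Ss_ge0 : 0 <= S - s by rewrite subr_ge0.
by rewrite lerDl mulr_ge0 //= -[leRHS](subrKC s) lerD2l ler_piMl.
Qed.

Lemma monomial_ivt_box (R : realType) (m n : nat) (s S t T e : R) :
  s <= S -> t <= T -> s ^+ m * t ^+ n <= e <= S ^+ m * T ^+ n ->
  exists x y : R, [/\ s <= x <= S, t <= y <= T & x ^+ m * y ^+ n = e].
Proof.
move=> sS tT /andP[f0_le f1_ge].
pose x l := s + l * (S - s); pose y l := t + l * (T - t).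
pose f l := x l ^+ m * y l ^+ n.
have f_cont : continuous f.
  have -> : f = horner ((s%:P + 'X * (S - s)%:P) ^+ m * (t%:P + 'X * (T - t)%:P) ^+ n).
    by apply/funext => l; rewrite !hornerE.
  exact: continuous_horner.
have f0 : f 0 = s ^+ m * t ^+ n by rewrite /f /x /y !mul0r !addr0.
have f1 : f 1 = S ^+ m * T ^+ n by rewrite /f /x /y !mul1r !subrKC.
have e_between : Num.min (f 0) (f 1) <= e <= Num.max (f 0) (f 1).
  by rewrite f0 f1 ge_min f0_le le_max f1_ge orbT.
have [c] := IVT ler01 (continuous_subspaceT f_cont) e_between.
rewrite in_itv /= => c01 fc.
by exists (x c), (y c); split; rewrite ?segment_point_between.
Qed.

Lemma balanced_scale {R : realType} {k : nat} {U : set 'rV[R]_k} {a x : R} {u} :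
  balanced U -> `|a| <= x -> U u -> exists2 w, U w & a *: u = x *: w.
Proof.
move=> bU a_le_x Uu; have [x0|x_neq0] := eqVneq x 0.
  by move: a_le_x; rewrite x0 normr_le0 => /eqP->; exists u; rewrite ?scale0r.
have x_gt0 : 0 < x by rewrite lt_def x_neq0 (le_trans _ a_le_x).
exists ((a / x) *: u); last by rewrite scalerA mulrC divfK.
by apply: bU Uu; rewrite normrM normfV (gtr0_norm x_gt0) ler_pdivrMr // mul1r.
Qed.

Theorem mainTheorem5 (R : realType) (d1 d2 : nat)
  (U : set 'rV[R]_d1) (V : set 'rV[R]_d2) (R1 R2 eps : R) :
  open U -> open V -> rel_compact U -> rel_compact V ->
  0 < R1 -> 0 < R2 -> 0 < eps -> eps <= R1 ^+ d1 * R2 ^+ d2 ->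
  balanced U -> balanced V ->
  twisted_prod U V R1 R2 (fun t => t <= eps) =
  twisted_prod U V R1 R2 (fun t => t = eps).
Proof.
move=> _ _ _ _ _ _ eps_gt0 eps_le bU bV.
apply/seteqP; split=> _ [u [v [a [b [Uu Vv aR1 bR2 [abe ->]]]]]]; last first.
  by exists u, v, a, b; split=> //; split=> //; rewrite abe.
have [x [y [/andP[a_le_x xR1] /andP[b_le_y yR2] xye]]] :
    exists x y : R, [/\ `|a| <= x <= R1, `|b| <= y <= R2 & x ^+ d1 * y ^+ d2 = eps].
  by apply: monomial_ivt_box; rewrite // -!normrX -normrM abe.
have [u' Uu' ->] := balanced_scale bU a_le_x Uu.
have [v' Vv' ->] := balanced_scale bV b_le_y Vv.
exists u', v', x, y; split; [exact: Uu' | exact: Vv' | | | split=> //].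
- by rewrite ger0_norm // (le_trans _ a_le_x).
- by rewrite ger0_norm // (le_trans _ b_le_y).
- by rewrite /= xye gtr0_norm.
Qed.
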